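(* Let $(G,D,\star)$ be a probabilistic metric space where $\star$ is a continuous triangle function. Then $(\Pi(G),\mathbb D,\star)$ is a completion of $G$: it is complete, $\delta:G\to\Pi(G)$ is an isometric embedding ($\mathbb D(\delta_a,\delta_b)=D(a,b)$) with dense image, and if $(X,\Lambda,\star)$ is any complete probabilistic metric space with an isometric map $\varphi:G\to X$ whose image is dense, then there is a bijective isometry $T:\Pi(G)\to X$ with $T\circ\delta=\varphi$. If moreover $(G,\cdot,D,\star)$ is an invariant probabilistic metric group, then $(\Pi(G),\odot,\mathbb D,\star)$ is its invariant probabilistic metric group completion: $\delta$ is in addition an injective group homomorphism, and if $(X,\Lambda,\star)$ is a complete invariant probabilistic metric group and $\varphi$ an isometric group homomorphism with dense image, then $T$ above is an isometric group isomorphism.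
   Context: A distribution function is a nondecreasing, left-continuous function $F:[-\infty,+\infty]\to[0,1]$ with $F(-\infty)=0$, $F(+\infty)=1$; $\Delta^+$ is the set of distribution functions with $F(0)=0$, ordered pointwise (a complete lattice with maximum $\mathcal H_0$, $\mathcal H_0(t)=0$ for $t\le0$, $1$ for $t>0$). A triangle function is a binary operation $\star$ on $\Delta^+$ that is commutative, associative, nondecreasing in each argument, with $F\star\mathcal H_0=F$. $F_n\xrightarrow{w}F$ means $F_n(t)\to F(t)$ at every continuity point $t\in\mathbb R$ of $F$; $\star$ is continuous if $F_n\star L_n\xrightarrow{w}F\star L$ whenever $F_n\xrightarrow{w}F$, $L_n\xrightarrow{w}L$. A probabilistic metric space $(G,D,\star)$ consists of a set $G$, a triangle function $\star$ and $D:G\times G\to\Delta^+$ with (i) $D(p,q)=\mathcal H_0$ iff $p=q$; (ii) $D(p,q)=D(q,p)$; (iii) $D(p,q)\star D(q,r)\le D(p,r)$. If $(G,\cdot)$ is a group and $D(pr,qr)=D(rp,rq)=D(p,q)$ for all $p,q,r$, it is an invariant probabilistic metric group. A sequence $(z_n)$ is Cauchy if $D(z_n,z_p)\xrightarrow{w}\mathcal H_0$ as $n,p\to\infty$; completeness means every Cauchy sequence has a point $z$ with $D(z_n,z)\xrightarrow{w}\mathcal H_0$. A subset $S$ is dense if every point is the limit (distance $\xrightarrow{w}\mathcal H_0$) of a sequence in $S$. A map $\varphi$ is isometric if it preserves the probabilistic distances. A map $f:G\to\Delta^+$ is probabilistic $1$-Lipschitz if $D(x,y)\star f(y)\le f(x)$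 for all $x,y$. $\delta_a(y)=D(y,a)$. $\Pi(G)$ is the set of probabilistic $1$-Lipschitz maps $f$ for which there is a Cauchy sequence $(a_n)\subset G$ with $D(a_n,x)\xrightarrow{w}f(x)$ for all $x$. $\mathbb D(f,g)=\sup_{x\in G}f(x)\star g(x)$ for $f,g\in\Pi(G)$. For maps $f,g:G\to\Delta^+$, $(f\odot g)(x)=\sup_{y,z\in G,\ yz=x}f(y)\star g(z)$. *)

From Stdlib Require Import Reals Lra Classical ClassicalEpsilon.
Open Scope R_scope.

Definition left_cont (f : R -> R) (t : R) : Prop :=
  forall eps, 0 < eps -> exists delta, 0 < delta /\
    forall s, t - delta < s < t -> Rabs (f s - f t) < eps.

(* An element of Delta^+, represented by its restriction to the real line
   (the values F(-oo) = 0 and F(+oo) = 1 are fixed by convention). *)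
Record Dplus : Type := mkDplus {
  dfun :> R -> R;
  d_range : forall t, 0 <= dfun t <= 1;
  d_mono : forall s t, s <= t -> dfun s <= dfun t;
  d_lcont : forall t, left_cont dfun t;
  d_zero : dfun 0 = 0 }.

Definition Dle (F L : Dplus) : Prop := forall t, F t <= L t.

Definition Dbot : Dplus.
Proof.
  refine (mkDplus (fun _ => 0) _ _ _ _).
  - intros; lra.
  - intros; lra.
  - intros t eps Heps; exists 1; split; [lra|]; intros; rewrite Rminus_diag, Rabs_R0; lra.
  - reflexivity.
Defined.

Definition H0fun (t : R) : R := if Rle_dec t 0 then 0 else 1.

Definition H0 : Dplus.
Proof.
  refine (mkDplus H0fun _ _ _ _); unfold H0fun.
  - intros t; destruct (Rle_dec t 0); lra.
  - intros s t Hst; destruct (Rle_dec s 0); destruct (Rle_dec t 0); lra.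
  - intros t eps Heps; destruct (Rle_dec t 0).
    + exists 1; split; [lra|]; intros s Hs; destruct (Rle_dec s 0); [|lra].
      rewrite Rminus_diag, Rabs_R0; lra.
    + exists t; split; [lra|]; intros s Hs; destruct (Rle_dec s 0); [lra|].
      rewrite Rminus_diag, Rabs_R0; lra.
  - destruct (Rle_dec 0 0); [reflexivity|lra].
Defined.

Definition D_is_lub (S : Dplus -> Prop) (F : Dplus) : Prop :=
  (forall L, S L -> Dle L F) /\ (forall U, (forall L, S L -> Dle L U) -> Dle F U).

Definition Dsup (S : Dplus -> Prop) : Dplus :=
  epsilon (inhabits Dbot) (fun F => D_is_lub S F).

Definition wconv (Fs : nat -> Dplus) (F : Dplus) : Prop :=
  forall t, continuity_pt F t -> Un_cv (fun n => Fs n t) (F t).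

Definition wconv2 (Fs : nat -> nat -> Dplus) (F : Dplus) : Prop :=
  forall t, continuity_pt F t -> forall eps, eps > 0 -> exists N : nat,
    forall n p : nat, (n >= N)%nat -> (p >= N)%nat -> Rabs (Fs n p t - F t) < eps.

Definition IsTriangleFun (star : Dplus -> Dplus -> Dplus) : Prop :=
  (forall F L, star F L = star L F) /\
  (forall F L M, star F (star L M) = star (star F L) M) /\
  (forall F F' L, Dle F F' -> Dle (star F L) (star F' L)) /\
  (forall F L L', Dle L L' -> Dle (star F L) (star F L')) /\
  (forall F, star F H0 = F).

Definition ContTF (star : Dplus -> Dplus -> Dplus) : Prop :=
  forall (Fs Ls : nat -> Dplus) F L, wconv Fs F -> wconv Ls L ->
    wconv (fun n => star (Fs n) (Ls n)) (star F L).

Definition PMS (X : Type) (Dx : X -> X -> Dplus) (star : Dplus -> Dplus -> Dplus) : Prop :=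
  IsTriangleFun star /\
  (forall p q, Dx p q = H0 <-> p = q) /\
  (forall p q, Dx p q = Dx q p) /\
  (forall p q r, Dle (star (Dx p q) (Dx q r)) (Dx p r)).

Definition IsGroup (X : Type) (mul : X -> X -> X) : Prop :=
  (forall x y z, mul x (mul y z) = mul (mul x y) z) /\
  exists e, (forall x, mul e x = x /\ mul x e = x) /\
            (forall x, exists y, mul x y = e /\ mul y x = e).

Definition Invariant (X : Type) (mul : X -> X -> X) (Dx : X -> X -> Dplus) : Prop :=
  forall p q r, Dx (mul p r) (mul q r) = Dx p q /\ Dx (mul r p) (mul r q) = Dx p q.

Definition IPMGroup (X : Type) (mul : X -> X -> X) (Dx : X -> X -> Dplus)
  (star : Dplus -> Dplus -> Dplus) : Prop :=
  PMS X Dx star /\ IsGroup X mul /\ Invariant X mul Dx.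

Definition Cauchy (X : Type) (Dx : X -> X -> Dplus) (z : nat -> X) : Prop :=
  wconv2 (fun n p => Dx (z n) (z p)) H0.

Definition Converges (X : Type) (Dx : X -> X -> Dplus) (z : nat -> X) (x : X) : Prop :=
  wconv (fun n => Dx (z n) x) H0.

Definition Complete (X : Type) (Dx : X -> X -> Dplus) : Prop :=
  forall z, Cauchy X Dx z -> exists x, Converges X Dx z x.

Definition DenseImage (Y X : Type) (Dx : X -> X -> Dplus) (phi : Y -> X) : Prop :=
  forall x, exists a : nat -> Y, Converges X Dx (fun n => phi (a n)) x.

Definition Isometric (Y X : Type) (Dy : Y -> Y -> Dplus) (Dx : X -> X -> Dplus)
  (phi : Y -> X) : Prop :=
  forall a b, Dx (phi a) (phi b) = Dy a b.

Definition Lip1 (G : Type) (D : G -> G -> Dplus) (star : Dplus -> Dplus -> Dplus)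
  (f : G -> Dplus) : Prop :=
  forall x y, Dle (star (D x y) (f y)) (f x).

Definition delta (G : Type) (D : G -> G -> Dplus) (a : G) : G -> Dplus :=
  fun y => D y a.

Definition inPi (G : Type) (D : G -> G -> Dplus) (star : Dplus -> Dplus -> Dplus)
  (f : G -> Dplus) : Prop :=
  Lip1 G D star f /\
  exists a : nat -> G, Cauchy G D a /\ forall x, wconv (fun n => D (a n) x) (f x).

Definition PiG (G : Type) (D : G -> G -> Dplus) (star : Dplus -> Dplus -> Dplus) : Type :=
  { f : G -> Dplus | inPi G D star f }.

Definition DD (G : Type) (star : Dplus -> Dplus -> Dplus) (f g : G -> Dplus) : Dplus :=
  Dsup (fun F => exists x, F = star (f x) (g x)).

Definition DPi (G : Type) (D : G -> G -> Dplus) (star : Dplus -> Dplus -> Dplus)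
  (f g : PiG G D star) : Dplus :=
  DD G star (proj1_sig f) (proj1_sig g).

Definition odot (G : Type) (mul : G -> G -> G) (star : Dplus -> Dplus -> Dplus)
  (f g : G -> Dplus) : G -> Dplus :=
  fun x => Dsup (fun F => exists y z, mul y z = x /\ F = star (f y) (g z)).

Definition Bijective (A B : Type) (T : A -> B) : Prop :=
  (forall u v, T u = T v -> u = v) /\ (forall b, exists u, T u = b).

(* A Cauchy sequence (a_n) of G determines the profile f(x) = lim D(a_n, x): the
   distances between two Cauchy sequences satisfy a Cauchy-type inequality in
   Delta^+, and such families converge weakly because star is continuous.
   Along representatives, DD(f, g) = lim D(a_n, b_n), so the metric axioms, the
   isometry of delta and completeness (via a diagonal sequence) pass to Pi(G).
   The isometry onto another completion X maps f to lim phi(a_n).  In the group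
   case the products a_n b_n represent f (.) g, so the group laws and the
   invariance of D pass to the limit as well. *)

From Stdlib Require Import Reals Lra Lia Classical ClassicalEpsilon FunctionalExtensionality ProofIrrelevance.
Open Scope R_scope.

Lemma Dplus_ext (F L : Dplus) : (forall t, F t = L t) -> F = L.
Proof.
  destruct F as [f f1 f2 f3 f4], L as [g g1 g2 g3 g4]; simpl; intro Hfg.
  assert (f = g) by (apply functional_extensionality; exact Hfg); subst g.
  f_equal; apply proof_irrelevance.
Qed.

Lemma Dle_refl F : Dle F F.
Proof. intro t; lra. Qed.

Lemma Dle_trans F L M : Dle F L -> Dle L M -> Dle F M.
Proof. intros H1 H2 t; specialize (H1 t); specialize (H2 t); lra. Qed.

Lemma Dle_antisym F L : Dle F L -> Dle L F -> F = L.
Proof. intros H1 H2; apply Dplus_ext; intro t; specialize (H1 t); specialize (H2 t); lra. Qed.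

Lemma Dplus_ge0 (F : Dplus) t : 0 <= F t.
Proof. apply (d_range F). Qed.

Lemma Dplus_le1 (F : Dplus) t : F t <= 1.
Proof. apply (d_range F). Qed.

Lemma Dplus_mono (F : Dplus) s t : s <= t -> F s <= F t.
Proof. apply d_mono. Qed.

Lemma Dplus_nonpos (F : Dplus) t : t <= 0 -> F t = 0.
Proof.
  intro Ht; pose proof (Dplus_mono F _ _ Ht); pose proof (Dplus_ge0 F t).
  rewrite d_zero in *; lra.
Qed.

Lemma H0_pos t : 0 < t -> H0 t = 1.
Proof. intro Ht; change (H0fun t = 1); unfold H0fun; destruct (Rle_dec t 0); lra. Qed.

Lemma Dle_H0 F : Dle F H0.
Proof.
  intro t; destruct (Rle_dec t 0) as [Ht|Ht].
  - rewrite !Dplus_nonpos by exact Ht; lra.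
  - rewrite H0_pos by lra; apply Dplus_le1.
Qed.

Definition cont_at (f : R -> R) (c : R) : Prop :=
  forall eps, 0 < eps -> exists del, 0 < del /\
    forall s, Rabs (s - c) < del -> Rabs (f s - f c) < eps.

Lemma continuity_pt_cont_at f c : continuity_pt f c <-> cont_at f c.
Proof.
  split; intros Hf eps Heps; destruct (Hf eps Heps) as [d [Hd Hs]]; exists d; split; auto.
  - intros s Hsc; destruct (Req_dec c s) as [<-|Hne].
    + rewrite Rminus_diag, Rabs_R0; lra.
    + apply (Hs s); split; [split; [exact I|exact Hne]|exact Hsc].
  - intros x [_ Hx]; apply Hs; exact Hx.
Qed.

Lemma H0_cont_at t : 0 < t -> cont_at H0 t.
Proof.
  intros Ht e He; exists t; split; auto; intros s Hs.
  apply Rabs_def2 in Hs; rewrite !H0_pos by lra; rewrite Rminus_diag, Rabs_R0; lra.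
Qed.

(** * Suprema in Delta^+ *)

Section Supremum.
Variable S : Dplus -> Prop.

Definition sup_values (t x : R) : Prop := x = 0 \/ exists F, S F /\ x = F t.

Lemma sup_values_bound t : bound (sup_values t).
Proof. exists 1; intros x [->|[F [_ ->]]]; [lra|apply Dplus_le1]. Qed.

Lemma sup_values_inhabited t : exists x, sup_values t x.
Proof. exists 0; left; reflexivity. Qed.

Definition psup (t : R) : R :=
  proj1_sig (completeness _ (sup_values_bound t) (sup_values_inhabited t)).

Lemma psup_is_lub t : is_lub (sup_values t) (psup t).
Proof. unfold psup; destruct completeness; assumption. Qed.

Lemma psup_ub t x : sup_values t x -> x <= psup t.
Proof. apply psup_is_lub. Qed.

Lemma psup_least t M : (forall x, sup_values t x -> x <= M) -> psup t <= M.
Proof. intro HM; apply psup_is_lub; exact HM. Qed.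

Lemma psup_ge0 t : 0 <= psup t.
Proof. apply psup_ub; left; reflexivity. Qed.

Lemma psup_ge t F : S F -> F t <= psup t.
Proof. intro HF; apply psup_ub; right; eauto. Qed.

Lemma psup_approx t eps : 0 < eps -> exists x, sup_values t x /\ psup t - eps < x.
Proof.
  intro He; apply NNPP; intro Hn.
  enough (psup t <= psup t - eps) by lra.
  apply psup_least; intros x Hx; apply Rnot_lt_le; intro; apply Hn; eauto.
Qed.

Lemma psup_mono s t : s <= t -> psup s <= psup t.
Proof.
  intro Hst; apply psup_least; intros x [->|[F [HF ->]]].
  - apply psup_ge0.
  - apply Rle_trans with (F t); [apply Dplus_mono; exact Hst|apply psup_ge; exact HF].
Qed.

Lemma psup_left_cont t : left_cont psup t.
Proof.
  intros eps Heps.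
  destruct (psup_approx t (eps/2)) as [x [[->|[F [HF ->]]] Hx]]; [lra| |].
  - exists 1; split; [lra|]; intros s Hs.
    pose proof (psup_mono s t ltac:(lra)); pose proof (psup_ge0 s).
    rewrite Rabs_left1; lra.
  - destruct (d_lcont F t (eps/2) ltac:(lra)) as [d [Hd Hs]].
    exists d; split; auto; intros s Hs'; specialize (Hs s Hs').
    pose proof (psup_ge s F HF); pose proof (psup_mono s t ltac:(lra)).
    apply Rabs_def2 in Hs; apply Rabs_def1; lra.
Qed.

Definition PsupD : Dplus.
Proof.
  refine (mkDplus psup _ psup_mono psup_left_cont _).
  - intro t; split; [apply psup_ge0|].
    apply psup_least; intros x [->|[F [_ ->]]]; [lra|apply Dplus_le1].
  - apply Rle_antisym; [|apply psup_ge0].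
    apply psup_least; intros x [->|[F [_ ->]]]; [lra|rewrite d_zero; lra].
Defined.

Lemma PsupD_lub : D_is_lub S PsupD.
Proof.
  split.
  - intros L HL t; apply psup_ge; exact HL.
  - intros U HU t; apply psup_least; intros x [->|[F [HF ->]]]; [apply Dplus_ge0|apply HU; exact HF].
Qed.

Lemma Dsup_lub : D_is_lub S (Dsup S).
Proof. unfold Dsup; apply epsilon_spec; exists PsupD; apply PsupD_lub. Qed.

Lemma Dsup_ub F : S F -> Dle F (Dsup S).
Proof. apply Dsup_lub. Qed.

Lemma Dsup_least U : (forall F, S F -> Dle F U) -> Dle (Dsup S) U.
Proof. apply Dsup_lub. Qed.

Lemma Dsup_approx t v : 0 <= v -> v < Dsup S t -> exists F, S F /\ v < F t.
Proof.
  intros Hv Hlt.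
  assert (HE : Dsup S = PsupD).
  { apply Dle_antisym; [apply Dsup_least, PsupD_lub|apply PsupD_lub; apply Dsup_lub]. }
  rewrite HE in Hlt; simpl in Hlt.
  destruct (psup_approx t (psup t - v) ltac:(lra)) as [x [[->|[F [HF ->]]] Hx]]; [lra|].
  exists F; split; [exact HF|lra].
Qed.
End Supremum.

(** * Continuity points of monotone functions *)

Section ContinuityPoint.
Variable f : R -> R.
Hypothesis f_mono : forall s t, s <= t -> f s <= f t.

(* Of the two quarter-shifted halves of [p, q], keep the one on which f
   increases least: it lies strictly inside [p, q] and carries at most half of
   the increase of f. *)
Definition shrink (pq : R * R) : R * R :=
  let (p, q) := pq in
  let p1 := p + (q - p) / 4 in let q1 := q - (q - p) / 4 in let m := (p + q) / 2 in
  if Rle_dec (f m - f p1) (f q1 - f m) then (p1, m) else (m, q1).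

Lemma shrink_spec p q : p < q ->
  let (p', q') := shrink (p, q) in
  p < p' /\ p' < q' /\ q' < q /\ 2 * (f q' - f p') <= f q - f p.
Proof.
  intro Hpq; unfold shrink.
  assert (f p <= f (p + (q - p) / 4)) by (apply f_mono; lra).
  assert (f (q - (q - p) / 4) <= f q) by (apply f_mono; lra).
  assert (f (p + (q - p) / 4) <= f ((p + q) / 2)) by (apply f_mono; lra).
  assert (f ((p + q) / 2) <= f (q - (q - p) / 4)) by (apply f_mono; lra).
  destruct (Rle_dec _ _); repeat split; lra.
Qed.

Variables a b : R.
Hypothesis Hab : a < b.

Fixpoint nested (k : nat) : R * R :=
  match k with O => (a, b) | S k => shrink (nested k) end.

Lemma nested_spec k : fst (nested k) < snd (nested k) /\
  2 ^ k * (f (snd (nested k)) - f (fst (nested k))) <= f b - f a.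
Proof.
  induction k as [|k [IH1 IH2]]; [simpl; lra|].
  change (nested (S k)) with (shrink (nested k)); rewrite <- tech_pow_Rmult.
  destruct (nested k) as [p q]; cbn [fst snd] in *.
  pose proof (shrink_spec p q IH1) as Hs; destruct (shrink (p, q)) as [p' q']; cbn [fst snd].
  assert (0 < 2 ^ k) by (apply pow_lt; lra); split; nra.
Qed.

Lemma nested_step k : fst (nested k) < fst (nested (S k)) /\ snd (nested (S k)) < snd (nested k).
Proof.
  change (nested (S k)) with (shrink (nested k)); pose proof (proj1 (nested_spec k)) as Hk.
  destruct (nested k) as [p q]; cbn [fst snd] in *.
  pose proof (shrink_spec p q Hk) as Hs; destruct (shrink (p, q)); cbn [fst snd]; lra.
Qed.

Lemma nested_lt j k : fst (nested j) < snd (nested k).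
Proof.
  assert (Hl : forall j k, (j <= k)%nat -> fst (nested j) <= fst (nested k)).
  { induction 1; [lra|pose proof (nested_step m); lra]. }
  assert (Hr : forall j k, (j <= k)%nat -> snd (nested k) <= snd (nested j)).
  { induction 1; [lra|pose proof (nested_step m); lra]. }
  destruct (Nat.le_ge_cases j k) as [H|H].
  - pose proof (Hl _ _ H); pose proof (proj1 (nested_spec k)); lra.
  - pose proof (Hr _ _ H); pose proof (proj1 (nested_spec j)); lra.
Qed.

Definition left_ends (x : R) : Prop := exists k, x = fst (nested k).

Lemma left_ends_bound : bound left_ends.
Proof. exists b; intros x [k ->]; pose proof (nested_lt k 0); simpl in *; lra. Qed.

Definition nested_point : R :=
  proj1_sig (completeness left_ends left_ends_bound (ex_intro _ a (ex_intro _ 0%nat eq_refl))).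

Lemma nested_point_inside k : fst (nested k) < nested_point < snd (nested k).
Proof.
  unfold nested_point; destruct completeness as [c [Hub Hl]]; simpl.
  pose proof (nested_step k).
  assert (fst (nested (S k)) <= c) by (apply Hub; exists (S k); reflexivity).
  assert (c <= snd (nested (S k))) by (apply Hl; intros x [j ->]; left; apply nested_lt).
  lra.
Qed.

Lemma pow2_unbounded eps : 0 < eps -> exists k, f b - f a < eps * 2 ^ k.
Proof.
  intro He; destruct (INR_unbounded ((f b - f a) / eps)) as [k Hk]; exists k.
  assert (INR k <= 2 ^ k).
  { clear Hk; induction k; [simpl; lra|].
    rewrite S_INR; simpl; assert (1 <= 2 ^ k) by (apply pow_R1_Rle; lra); lra. }
  apply Rmult_gt_compat_r with (r := eps) in Hk; [|exact He].
  unfold Rdiv in Hk; rewrite Rmult_assoc, Rinv_l in Hk by lra; nra.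
Qed.

Lemma nested_point_cont_at : cont_at f nested_point.
Proof.
  intros eps He; destruct (pow2_unbounded eps He) as [k Hk].
  pose proof (nested_point_inside k); pose proof (nested_spec k) as [_ Hosc].
  assert (0 < 2 ^ k) by (apply pow_lt; lra).
  destruct (nested k) as [p q]; simpl in *.
  exists (Rmin (nested_point - p) (q - nested_point)); split; [apply Rmin_glb_lt; lra|].
  intros s Hs; pose proof (Rmin_l (nested_point - p) (q - nested_point));
    pose proof (Rmin_r (nested_point - p) (q - nested_point)).
  apply Rabs_def2 in Hs.
  assert (f p <= f s) by (apply f_mono; lra); assert (f s <= f q) by (apply f_mono; lra).
  assert (f p <= f nested_point) by (apply f_mono; lra).
  assert (f nested_point <= f q) by (apply f_mono; lra).
  assert (f q - f p < eps) by nra.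
  apply Rabs_def1; lra.
Qed.
End ContinuityPoint.

Lemma monotone_cont_at_between (f : R -> R) a b :
  (forall s t, s <= t -> f s <= f t) -> a < b -> exists c, a < c < b /\ cont_at f c.
Proof.
  intros Hf Hab; exists (nested_point f Hf a b Hab); split.
  - exact (nested_point_inside f Hf a b Hab 0).
  - apply nested_point_cont_at.
Qed.

(* A jump of f would be a jump of f + g. *)
Lemma cont_at_summand (f g : R -> R) c :
  (forall s t, s <= t -> f s <= f t) -> (forall s t, s <= t -> g s <= g t) ->
  cont_at (fun t => f t + g t) c -> cont_at f c.
Proof.
  intros Hf Hg Hfg eps He; destruct (Hfg eps He) as [d [Hd Hs]]; exists d; split; auto.
  intros s Hsd; specialize (Hs s Hsd); apply Rabs_def2 in Hs; apply Rabs_def1;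
    destruct (Rle_dec s c) as [Hsc|Hsc].
  all: try (pose proof (Hf _ _ Hsc); pose proof (Hg _ _ Hsc); lra).
  all: assert (c <= s) by lra; pose proof (Hf c s ltac:(lra)); pose proof (Hg c s ltac:(lra)); lra.
Qed.

Lemma Dplus_common_continuity_point (F L : Dplus) a b : a < b ->
  exists c, a < c < b /\ continuity_pt F c /\ continuity_pt L c.
Proof.
  intro Hab.
  destruct (monotone_cont_at_between (fun t => F t + L t) a b) as [c [Hc Hcc]]; auto.
  { intros s t Hst; pose proof (Dplus_mono F s t Hst); pose proof (Dplus_mono L s t Hst); lra. }
  exists c; split; [exact Hc|]; split; apply continuity_pt_cont_at.
  - apply (cont_at_summand F L); auto; apply Dplus_mono.
  - apply (cont_at_summand L F); try apply Dplus_mono.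
    intros e He; destruct (Hcc e He) as [d [Hd Hs]]; exists d; split; auto.
    intros s Hsd; rewrite (Rplus_comm (L s)), (Rplus_comm (L c)); auto.
Qed.

(** * Weak convergence *)

Lemma Un_cv_const x : Un_cv (fun _ => x) x.
Proof. intros e He; exists 0%nat; intros; unfold Rdist; rewrite Rminus_diag, Rabs_R0; lra. Qed.

Lemma Un_cv_ge u l v N : Un_cv u l -> (forall n, (n >= N)%nat -> v <= u n) -> v <= l.
Proof.
  intros Hu Hv; apply Rnot_lt_le; intro Hl; destruct (Hu (v - l) ltac:(lra)) as [M HM].
  specialize (HM (max M N) ltac:(lia)); specialize (Hv (max M N) ltac:(lia)).
  unfold Rdist in HM; apply Rabs_def2 in HM; lra.
Qed.

(* Compare at a common continuity point just left of t, then use left-continuity of F. *)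
Lemma wconv_le Fs Ls F L : wconv Fs F -> wconv Ls L -> (forall n, Dle (Fs n) (Ls n)) -> Dle F L.
Proof.
  intros HF HL Hle t; apply Rnot_lt_le; intro Hlt.
  destruct (d_lcont F t ((F t - L t) / 2) ltac:(lra)) as [d [Hd Hs]].
  destruct (Dplus_common_continuity_point F L (t - d) t ltac:(lra)) as [c [Hc [HcF HcL]]].
  assert (F c <= L c) by (eapply Rle_cv_lim; [intro n; apply (Hle n c)|apply HF|apply HL]; auto).
  specialize (Hs c Hc); apply Rabs_def2 in Hs; pose proof (Dplus_mono L c t ltac:(lra)); lra.
Qed.

Lemma wconv_const F : wconv (fun _ => F) F.
Proof. intros t _; apply Un_cv_const. Qed.

Lemma wconv_unique Fs F L : wconv Fs F -> wconv Fs L -> F = L.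
Proof. intros; apply Dle_antisym; eapply wconv_le; eauto; intros; apply Dle_refl. Qed.

Lemma wconv_ext Fs Gs F : (forall n, Fs n = Gs n) -> wconv Fs F -> wconv Gs F.
Proof. intro E; replace Gs with Fs; [auto|apply functional_extensionality; exact E]. Qed.

Lemma wconv_lb Fs F s t v N :
  wconv Fs F -> (forall n, (n >= N)%nat -> v <= Fs n s) -> s < t -> v <= F t.
Proof.
  intros HF Hv Hst; destruct (Dplus_common_continuity_point F F s t Hst) as [c [Hc [Hcc _]]].
  apply Rle_trans with (F c); [|apply Dplus_mono; lra].
  apply (Un_cv_ge (fun n => Fs n c) _ v N); [apply HF; exact Hcc|].
  intros n Hn; specialize (Hv n Hn); pose proof (Dplus_mono (Fs n) s c ltac:(lra)); lra.
Qed.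

(* Weak convergence to H0 only has to be checked at positive arguments. *)
Definition toH0 (Fs : nat -> Dplus) : Prop :=
  forall t, 0 < t -> forall eps, 0 < eps -> exists N, forall n, (n >= N)%nat -> 1 - eps < Fs n t.

Definition toH0_2 (W : nat -> nat -> Dplus) : Prop :=
  forall t, 0 < t -> forall eps, 0 < eps ->
    exists N, forall n p, (n >= N)%nat -> (p >= N)%nat -> 1 - eps < W n p t.

Lemma toH0_wconv Fs : toH0 Fs <-> wconv Fs H0.
Proof.
  split.
  - intros H t _ e He; destruct (Rle_dec t 0) as [Ht|Ht].
    + exists 0%nat; intros n _; unfold Rdist.
      rewrite !Dplus_nonpos by exact Ht; rewrite Rminus_diag, Rabs_R0; lra.
    + destruct (H t ltac:(lra) e He) as [N HN]; exists N; intros n Hn; specialize (HN n Hn).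
      unfold Rdist; rewrite H0_pos by lra; pose proof (Dplus_le1 (Fs n) t); apply Rabs_def1; lra.
  - intros H t Ht e He.
    destruct (H t (proj2 (continuity_pt_cont_at _ _) (H0_cont_at t Ht)) e He) as [N HN].
    exists N; intros n Hn; specialize (HN n Hn); unfold Rdist in HN; rewrite H0_pos in HN by lra.
    apply Rabs_def2 in HN; lra.
Qed.

Lemma toH0_2_wconv2 W : toH0_2 W <-> wconv2 W H0.
Proof.
  split.
  - intros H t _ e He; destruct (Rle_dec t 0) as [Ht|Ht].
    + exists 0%nat; intros n p _ _; rewrite !Dplus_nonpos by exact Ht.
      rewrite Rminus_diag, Rabs_R0; lra.
    + destruct (H t ltac:(lra) e He) as [N HN]; exists N; intros n p Hn Hp.
      specialize (HN n p Hn Hp); rewrite H0_pos by lra.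
      pose proof (Dplus_le1 (W n p) t); apply Rabs_def1; lra.
  - intros H t Ht e He.
    destruct (H t (proj2 (continuity_pt_cont_at _ _) (H0_cont_at t Ht)) e He) as [N HN].
    exists N; intros n p Hn Hp; specialize (HN n p Hn Hp); rewrite H0_pos in HN by lra.
    apply Rabs_def2 in HN; lra.
Qed.

Lemma toH0_mono Fs Gs : toH0 Fs -> (forall n, Dle (Fs n) (Gs n)) -> toH0 Gs.
Proof.
  intros H Hle t Ht e He; destruct (H t Ht e He) as [N HN]; exists N; intros n Hn.
  specialize (HN n Hn); specialize (Hle n t); lra.
Qed.

Lemma toH0_2_mono V W : toH0_2 V -> (forall n p, Dle (V n p) (W n p)) -> toH0_2 W.
Proof.
  intros H Hle t Ht e He; destruct (H t Ht e He) as [N HN]; exists N; intros n p Hn Hp.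
  specialize (HN n p Hn Hp); specialize (Hle n p t); lra.
Qed.

Lemma toH0_ext Fs Gs : toH0 Fs -> (forall n, Fs n = Gs n) -> toH0 Gs.
Proof. intros H E; apply (toH0_mono Fs); auto; intros n; rewrite E; apply Dle_refl. Qed.

Lemma toH0_2_ext V W : toH0_2 V -> (forall n p, V n p = W n p) -> toH0_2 W.
Proof. intros H E; apply (toH0_2_mono V); auto; intros n p; rewrite E; apply Dle_refl. Qed.

Lemma toH0_2_left Fs : toH0 Fs -> toH0_2 (fun m n => Fs m).
Proof. intros H t Ht e He; destruct (H t Ht e He) as [N HN]; exists N; intros; auto. Qed.

Lemma toH0_2_sym W : toH0_2 W -> toH0_2 (fun m n => W n m).
Proof. intros H t Ht e He; destruct (H t Ht e He) as [N HN]; exists N; intros; auto. Qed.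

Lemma toH0_2_diag W (n p : nat -> nat) :
  toH0_2 W -> (forall k, (n k >= k)%nat /\ (p k >= k)%nat) -> toH0 (fun k => W (n k) (p k)).
Proof.
  intros H Hnp t Ht e He; destruct (H t Ht e He) as [N HN]; exists N; intros k Hk.
  specialize (Hnp k); apply HN; lia.
Qed.

Lemma wconv2_of_diag W F :
  (forall n p : nat -> nat, (forall k, (n k >= k)%nat /\ (p k >= k)%nat) ->
     wconv (fun k => W (n k) (p k)) F) -> wconv2 W F.
Proof.
  intros H t Ht e He; apply NNPP; intro Hn.
  assert (Hbad : forall N, exists np : nat * nat, (fst np >= N)%nat /\ (snd np >= N)%nat /\
                   ~ Rabs (W (fst np) (snd np) t - F t) < e).
  { intro N; apply NNPP; intro Hn2; apply Hn; exists N; intros n p Hn' Hp'.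
    apply NNPP; intro; apply Hn2; exists (n, p); auto. }
  destruct (choice _ Hbad) as [g Hg].
  destruct (H (fun k => fst (g k)) (fun k => snd (g k))) with (t := t) (eps := e) as [N HN]; auto.
  { intro k; specialize (Hg k); tauto. }
  specialize (HN N (le_n N)); specialize (Hg N); unfold Rdist in HN; tauto.
Qed.

Lemma toH0_row_limits (W : nat -> nat -> Dplus) (L : nat -> Dplus) :
  toH0_2 W -> (forall n, wconv (fun m => W n m) (L n)) -> toH0 L.
Proof.
  intros HW HL t Ht e He; destruct (HW (t/2) ltac:(lra) (e/2) ltac:(lra)) as [N HN].
  exists N; intros n Hn; enough (1 - e/2 <= L n t) by lra.
  apply (wconv_lb (fun m => W n m) (L n) (t/2) t (1 - e/2) N); auto; [|lra].
  intros m Hm; left; apply HN; auto.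
Qed.

(* The step function jumping from 0 to c just after s; the clamping of c and s
   only serves to make it a distribution function for all arguments. *)
Definition stepD (c s : R) : Dplus.
Proof.
  refine (mkDplus (fun t => if Rle_dec t (Rmax 0 s) then 0 else Rmax 0 (Rmin 1 c)) _ _ _ _).
  - intro t; destruct (Rle_dec t (Rmax 0 s)); [lra|].
    split; [apply Rmax_l|apply Rmax_lub; [lra|apply Rmin_l]].
  - intros x y Hxy; destruct (Rle_dec x (Rmax 0 s)), (Rle_dec y (Rmax 0 s)); try lra.
    apply Rmax_l.
  - intros t eps Heps; destruct (Rle_dec t (Rmax 0 s)).
    + exists 1; split; [lra|]; intros x Hx; destruct (Rle_dec x (Rmax 0 s)); [|lra].
      rewrite Rminus_diag, Rabs_R0; lra.
    + exists (t - Rmax 0 s); split; [lra|]; intros x Hx; destruct (Rle_dec x (Rmax 0 s)); [lra|].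
      rewrite Rminus_diag, Rabs_R0; lra.
  - destruct (Rle_dec 0 (Rmax 0 s)) as [|Hn]; [reflexivity|].
    exfalso; apply Hn, Rmax_l.
Defined.

Lemma stepD_val c s t : 0 <= s -> 0 <= c <= 1 -> stepD c s t = if Rle_dec t s then 0 else c.
Proof.
  intros Hs Hc; cbn [dfun stepD].
  rewrite Rmax_right, (Rmin_right 1 c), (Rmax_right 0 c) by lra; reflexivity.
Qed.

Lemma stepD_cont_at c s t : 0 <= s -> 0 <= c <= 1 -> s < t -> continuity_pt (stepD c s) t.
Proof.
  intros Hs Hc Hst; apply continuity_pt_cont_at; intros e He; exists (t - s); split; [lra|].
  intros x Hx; apply Rabs_def2 in Hx; rewrite !stepD_val by assumption.
  destruct (Rle_dec x s), (Rle_dec t s); try lra.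
  rewrite Rminus_diag, Rabs_R0; lra.
Qed.

Section TriangleFunction.
Context {star : Dplus -> Dplus -> Dplus} (HT : IsTriangleFun star) (Hc : ContTF star).

Lemma star_comm F L : star F L = star L F.
Proof. apply HT. Qed.

Lemma star_assoc F L M : star F (star L M) = star (star F L) M.
Proof. apply HT. Qed.

Lemma star_H0r F : star F H0 = F.
Proof. apply HT. Qed.

Lemma star_H0l F : star H0 F = F.
Proof. rewrite star_comm; apply star_H0r. Qed.

Lemma star_mono F F' L L' : Dle F F' -> Dle L L' -> Dle (star F L) (star F' L').
Proof. intros H1 H2; apply Dle_trans with (star F' L); apply HT; assumption. Qed.

Lemma toH0_star Fs Ls : toH0 Fs -> toH0 Ls -> toH0 (fun n => star (Fs n) (Ls n)).
Proof.
  rewrite !toH0_wconv; intros HF HL; rewrite <- (star_H0r H0); apply Hc; assumption.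
Qed.

Lemma wconv_H0star Fs Ls L : toH0 Fs -> wconv Ls L -> wconv (fun n => star (Fs n) (Ls n)) L.
Proof. rewrite toH0_wconv; intros HF HL; rewrite <- (star_H0l L); apply Hc; assumption. Qed.

Lemma wconv_starH0 Fs Ls L : toH0 Fs -> wconv Ls L -> wconv (fun n => star (Ls n) (Fs n)) L.
Proof. rewrite toH0_wconv; intros HF HL; rewrite <- (star_H0r L); apply Hc; assumption. Qed.

Lemma toH0_2_star V W : toH0_2 V -> toH0_2 W -> toH0_2 (fun m n => star (V m n) (W m n)).
Proof.
  intros HV HW; apply toH0_2_wconv2, wconv2_of_diag; intros n p Hnp.
  apply toH0_wconv, (toH0_star (fun k => V (n k) (p k)) (fun k => W (n k) (p k)));
    apply toH0_2_diag; assumption.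
Qed.

Lemma wconv2_H0star W B : toH0_2 W -> wconv2 (fun m n => star (W m n) B) B.
Proof.
  intro HW; apply wconv2_of_diag; intros n p Hnp.
  apply (wconv_H0star (fun k => W (n k) (p k)) (fun _ => B)).
  - apply toH0_2_diag; assumption.
  - apply wconv_const.
Qed.

(** * A Cauchy criterion for distribution functions *)

Section WeakLimit.
Variables (u : nat -> Dplus) (W : nat -> nat -> Dplus).
Hypothesis HW : toH0_2 W.
Hypothesis Hu : forall m n, Dle (star (W m n) (u n)) (u m).

(* The weak limit is the supremum of the steps that eventually lie below u. *)
Definition eventual_steps (F : Dplus) : Prop :=
  exists c s, 0 <= s /\ 0 <= c /\ (exists N, forall n, (n >= N)%nat -> c <= u n s) /\
    F = stepD c s.

Definition lower_envelope : Dplus := Dsup eventual_steps.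

Lemma lower_envelope_below t e : 0 < e ->
  exists N, forall n, (n >= N)%nat -> lower_envelope t - e < u n t.
Proof.
  intro He; destruct (Rlt_dec (lower_envelope t - e) 0) as [Hneg|Hneg].
  { exists 0%nat; intros n _; pose proof (Dplus_ge0 (u n) t); lra. }
  destruct (Dsup_approx eventual_steps t (lower_envelope t - e)) as
    [F [[c [s [Hs [Hc0 [[N HN] ->]]]]] Hv]]; [lra|unfold lower_envelope; lra|].
  assert (c <= 1) by (specialize (HN N (le_n N)); pose proof (Dplus_le1 (u N) s); lra).
  rewrite stepD_val in Hv by lra; destruct (Rle_dec t s) as [|Hts]; [lra|].
  exists N; intros n Hn; specialize (HN n Hn); pose proof (Dplus_mono (u n) s t ltac:(lra)); lra.
Qed.

Lemma frequently_ge_propagates c t t' e : 0 < e -> 0 <= c <= 1 -> 0 <= t < t' ->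
  (forall N, exists n, (n >= N)%nat /\ c <= u n t) ->
  exists M, forall m, (m >= M)%nat -> c - e < u m t'.
Proof.
  intros He Hc01 Htt' Hfreq; set (B := stepD c t).
  assert (HBt' : B t' = c) by (unfold B; rewrite stepD_val by lra; destruct (Rle_dec t' t); lra).
  destruct (wconv2_H0star W B HW t' (stepD_cont_at c t t' ltac:(lra) Hc01 ltac:(lra)) e He)
    as [N HN].
  exists N; intros m Hm; destruct (Hfreq N) as [n [Hn Hcn]].
  assert (HBu : Dle B (u n)).
  { intro r; unfold B; rewrite stepD_val by lra; destruct (Rle_dec r t); [apply Dplus_ge0|].
    pose proof (Dplus_mono (u n) t r ltac:(lra)); lra. }
  specialize (HN m n Hm Hn); apply Rabs_def2 in HN.
  pose proof (star_mono _ _ _ _ (Dle_refl (W m n)) HBu t'); pose proof (Hu m n t'); lra.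
Qed.

Lemma lower_envelope_above t e : 0 < t -> continuity_pt lower_envelope t -> 0 < e ->
  exists N, forall n, (n >= N)%nat -> u n t < lower_envelope t + e.
Proof.
  intros Ht Hct He; apply NNPP; intro Hn; set (c := lower_envelope t + e).
  pose proof (Dplus_ge0 lower_envelope t) as HU0.
  assert (Hfreq : forall N, exists n, (n >= N)%nat /\ c <= u n t).
  { intro N; apply NNPP; intro Hn2; apply Hn; exists N; intros n Hn'.
    apply Rnot_le_lt; intro; apply Hn2; eauto. }
  assert (Hc01 : 0 <= c <= 1).
  { destruct (Hfreq 0%nat) as [n [_ Hn']]; pose proof (Dplus_le1 (u n) t).
    unfold c in *; lra. }
  apply continuity_pt_cont_at in Hct; destruct (Hct (e/2) ltac:(lra)) as [d [Hd Hdd]].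
  set (t1 := t + d/2); set (t2 := t + d/4).
  assert (Ht1 : lower_envelope t1 < lower_envelope t + e/2).
  { specialize (Hdd t1 ltac:(unfold t1; rewrite Rabs_right; lra)); apply Rabs_def2 in Hdd; lra. }
  destruct (frequently_ge_propagates c t t2 (e/2)) as [M HM];
    [lra|exact Hc01|unfold t2; lra|exact Hfreq|].
  assert (Hstep : eventual_steps (stepD (c - e/2) t2)).
  { exists (c - e/2), t2; split; [unfold t2; lra|]; split; [unfold c; lra|].
    split; [|reflexivity].
    exists M; intros m Hm; left; apply HM; exact Hm. }
  pose proof (Dsup_ub eventual_steps _ Hstep t1) as Hle; fold lower_envelope in Hle.
  rewrite stepD_val in Hle by (unfold t2, c in *; lra).
  destruct (Rle_dec t1 t2); unfold t1, t2, c in *; lra.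
Qed.

Lemma wconv_exists : exists U, wconv u U.
Proof.
  exists lower_envelope; intros t Hct e He.
  destruct (Rle_dec t 0) as [Ht|Ht].
  { exists 0%nat; intros n _; unfold Rdist.
    rewrite !Dplus_nonpos by exact Ht; rewrite Rminus_diag, Rabs_R0; lra. }
  destruct (lower_envelope_below t e He) as [N1 HN1].
  destruct (lower_envelope_above t e ltac:(lra) Hct He) as [N2 HN2].
  exists (max N1 N2); intros n Hn; unfold Rdist.
  specialize (HN1 n ltac:(lia)); specialize (HN2 n ltac:(lia)); apply Rabs_def1; lra.
Qed.
End WeakLimit.

(** * Probabilistic metric spaces *)

Section MetricFacts.
Context {X : Type} {Lam : X -> X -> Dplus} (HX : PMS X Lam star).

Lemma dist_sym p q : Lam p q = Lam q p.
Proof. apply HX. Qed.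

Lemma dist_triangle p q r : Dle (star (Lam p q) (Lam q r)) (Lam p r).
Proof. apply HX. Qed.

Lemma dist_eq_H0 p q : Lam p q = H0 -> p = q.
Proof. apply HX. Qed.

Lemma dist_refl p : Lam p p = H0.
Proof. apply HX; reflexivity. Qed.

Lemma dist_triangle3 p q r s : Dle (star (Lam p q) (star (Lam q r) (Lam r s))) (Lam p s).
Proof.
  eapply Dle_trans; [|apply (dist_triangle p q s)].
  apply star_mono; [apply Dle_refl|apply dist_triangle].
Qed.

Lemma Cauchy_toH0_2 z : Cauchy X Lam z <-> toH0_2 (fun n p => Lam (z n) (z p)).
Proof. unfold Cauchy; rewrite toH0_2_wconv2; tauto. Qed.

Lemma Converges_toH0 z x : Converges X Lam z x <-> toH0 (fun n => Lam (z n) x).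
Proof. unfold Converges; rewrite toH0_wconv; tauto. Qed.

Lemma Converges_toH0_sym z x : Converges X Lam z x <-> toH0 (fun n => Lam x (z n)).
Proof.
  rewrite Converges_toH0; split; intro H; eapply toH0_ext; try exact H; intro; apply dist_sym.
Qed.

Lemma Converges_const x : Converges X Lam (fun _ => x) x.
Proof. unfold Converges; apply (wconv_ext (fun _ => H0)); [intro; rewrite dist_refl; auto|apply wconv_const]. Qed.

Lemma Converges_Cauchy z x : Converges X Lam z x -> Cauchy X Lam z.
Proof.
  intro Hz; apply Cauchy_toH0_2.
  apply (toH0_2_mono (fun m n => star (Lam (z m) x) (Lam x (z n)))); [|intros; apply dist_triangle].
  apply toH0_2_star; [apply toH0_2_left, Converges_toH0, Hz|].
  apply (toH0_2_sym (fun n m => Lam x (z n))), toH0_2_left, Converges_toH0_sym, Hz.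
Qed.

Lemma Converges_unique z x y : Converges X Lam z x -> Converges X Lam z y -> x = y.
Proof.
  intros Hx Hy; apply dist_eq_H0, Dle_antisym; [apply Dle_H0|].
  apply (wconv_le (fun n => star (Lam x (z n)) (Lam (z n) y)) (fun _ => Lam x y)).
  - rewrite <- (star_H0r H0); apply Hc; apply toH0_wconv;
      [apply Converges_toH0_sym, Hx|apply Converges_toH0, Hy].
  - apply wconv_const.
  - intros; apply dist_triangle.
Qed.

Lemma wconv_dist_Cauchy x y : Cauchy X Lam x -> Cauchy X Lam y ->
  exists U, wconv (fun n => Lam (x n) (y n)) U.
Proof.
  intros Hx Hy; rewrite Cauchy_toH0_2 in Hx, Hy.
  apply (wconv_exists _ (fun m n => star (Lam (x m) (x n)) (Lam (y n) (y m)))).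
  - apply toH0_2_star; [exact Hx|apply (toH0_2_sym (fun n m => Lam (y n) (y m))), Hy].
  - intros m n; eapply Dle_trans; [|apply (dist_triangle3 (x m) (x n) (y n) (y m))].
    rewrite <- star_assoc, (star_comm (Lam (y n) (y m))); apply Dle_refl.
Qed.

Lemma wconv_dist x y xs ys : Converges X Lam xs x -> Converges X Lam ys y ->
  wconv (fun n => Lam (xs n) (ys n)) (Lam x y).
Proof.
  intros Hx Hy.
  destruct (wconv_dist_Cauchy xs ys) as [U HU]; try (eapply Converges_Cauchy; eassumption).
  replace (Lam x y) with U; [exact HU|apply Dle_antisym].
  - apply (wconv_le (fun n => star (Lam x (xs n)) (star (Lam (xs n) (ys n)) (Lam (ys n) y)))
                    (fun _ => Lam x y)).
    + apply wconv_H0star; [apply Converges_toH0_sym, Hx|].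
      apply wconv_starH0; [apply Converges_toH0, Hy|exact HU].
    + apply wconv_const.
    + intros; apply dist_triangle3.
  - apply (wconv_le (fun n => star (Lam (xs n) x) (star (Lam x y) (Lam y (ys n))))
                    (fun n => Lam (xs n) (ys n))); [|exact HU|intros; apply dist_triangle3].
    apply wconv_H0star; [apply Converges_toH0, Hx|].
    apply wconv_starH0; [apply Converges_toH0_sym, Hy|apply wconv_const].
Qed.
End MetricFacts.

(** * The space of limit profiles *)

Section Completion.
Context {G : Type} {D : G -> G -> Dplus} (HG : PMS G D star).

Definition Represents (f : G -> Dplus) (a : nat -> G) : Prop :=
  Cauchy G D a /\ forall x, wconv (fun n => D (a n) x) (f x).

Lemma Represents_Lip1 f a : Represents f a -> Lip1 G D star f.
Proof.
  intros [_ Hf] x y.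
  apply (wconv_le (fun n => star (D x y) (D (a n) y)) (fun n => D (a n) x));
    [apply Hc; [apply wconv_const|apply Hf]|apply Hf|].
  intro n; rewrite star_comm, (dist_sym HG x y); apply (dist_triangle HG).
Qed.

Lemma inPi_Represents f : inPi G D star f <-> exists a, Represents f a.
Proof.
  split; [intros [_ H]; exact H|].
  intros [a Ha]; split; [eapply Represents_Lip1; eassumption|exists a; exact Ha].
Qed.

Lemma Cauchy_const a : Cauchy G D (fun _ => a).
Proof. apply (Converges_Cauchy HG _ a), (Converges_const HG). Qed.

Lemma Represents_exists a : Cauchy G D a -> exists f, Represents f a.
Proof.
  intro Ha; destruct (choice (fun x U => wconv (fun n => D (a n) x) U)) as [f Hf].
  - intro x; apply (wconv_dist_Cauchy HG a (fun _ => x)); [exact Ha|apply Cauchy_const].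
  - exists f; split; assumption.
Qed.

Lemma Represents_unique f g a : Represents f a -> Represents g a -> f = g.
Proof.
  intros [_ Hf] [_ Hg]; apply functional_extensionality; intro x; eapply wconv_unique; eauto.
Qed.

Lemma Represents_ext f a b : (forall n, a n = b n) -> Represents f a -> Represents f b.
Proof. intro E; replace b with a; [auto|apply functional_extensionality; exact E]. Qed.

Lemma Represents_diag f a : Represents f a -> toH0 (fun n => f (a n)).
Proof.
  intros [Ha Hf]; apply (toH0_row_limits (fun n m => D (a m) (a n))); [|intro n; apply Hf].
  apply Cauchy_toH0_2 in Ha.
  apply (toH0_2_ext _ _ (toH0_2_sym _ Ha)); intros; reflexivity.
Qed.

Lemma Represents_delta a : Represents (delta G D a) (fun _ => a).
Proof.
  split; [apply Cauchy_const|intro x; unfold delta; rewrite (dist_sym HG x a); apply wconv_const].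
Qed.

Lemma delta_inPi a : inPi G D star (delta G D a).
Proof. apply inPi_Represents; eexists; apply Represents_delta. Qed.

Lemma DD_Represents f g a b : Represents f a -> Represents g b ->
  wconv (fun n => D (a n) (b n)) (DD G star f g).
Proof.
  intros Hfa Hgb; pose proof Hfa as [Ha Hf]; pose proof Hgb as [Hb Hg].
  destruct (wconv_dist_Cauchy HG a b Ha Hb) as [U HU].
  replace (DD G star f g) with U; [exact HU|apply Dle_antisym].
  - apply (wconv_le (fun n => star (f (a n)) (star (D (a n) (b n)) (g (b n)))) (fun _ => DD G star f g));
      [|apply wconv_const|].
    + apply wconv_H0star; [eapply Represents_diag; eassumption|].
      apply wconv_starH0; [eapply Represents_diag; eassumption|exact HU].
    + intro n; apply Dle_trans with (star (f (a n)) (g (a n))).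
      * apply star_mono; [apply Dle_refl|apply (Represents_Lip1 g b Hgb)].
      * apply Dsup_ub; exists (a n); reflexivity.
  - apply Dsup_least; intros F [z ->].
    apply (wconv_le (fun n => star (D (a n) z) (D (b n) z)) (fun n => D (a n) (b n)));
      [apply Hc; [apply Hf|apply Hg]|exact HU|].
    intro n; rewrite (dist_sym HG (b n) z); apply (dist_triangle HG).
Qed.

Lemma DD_Represents_eq f g a b L : Represents f a -> Represents g b ->
  wconv (fun n => D (a n) (b n)) L -> DD G star f g = L.
Proof. intros; eapply wconv_unique; [apply DD_Represents|]; eassumption. Qed.

Lemma DD_delta a b : DD G star (delta G D a) (delta G D b) = D a b.
Proof.
  apply (DD_Represents_eq _ _ (fun _ => a) (fun _ => b)); try apply Represents_delta.
  apply wconv_const.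
Qed.

Lemma DD_delta_l f a b : Represents f a -> DD G star (delta G D b) f = f b.
Proof.
  intros [Ha Hf]; apply (DD_Represents_eq _ _ (fun _ => b) a); [apply Represents_delta|split; auto|].
  apply (wconv_ext (fun n => D (a n) b)); [intros; apply (dist_sym HG)|apply Hf].
Qed.

Lemma delta_inj a b : delta G D a = delta G D b -> a = b.
Proof.
  intro E; apply (dist_eq_H0 HG); pose proof (f_equal (fun h => h a) E) as Ea.
  unfold delta in Ea; rewrite (dist_refl HG) in Ea; symmetry; exact Ea.
Qed.

Lemma DD_refl f : inPi G D star f -> DD G star f f = H0.
Proof.
  intro Hf; apply inPi_Represents in Hf as [a Ha].
  apply (DD_Represents_eq _ _ a a); auto.
  apply (wconv_ext (fun _ => H0)); [intros; rewrite (dist_refl HG); auto|apply wconv_const].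
Qed.

Lemma DD_sym f g : inPi G D star f -> inPi G D star g -> DD G star f g = DD G star g f.
Proof.
  intros Hf Hg; apply inPi_Represents in Hf as [a Ha]; apply inPi_Represents in Hg as [b Hb].
  apply (DD_Represents_eq _ _ a b); auto.
  apply (wconv_ext (fun n => D (b n) (a n))); [intros; apply (dist_sym HG)|].
  apply DD_Represents; assumption.
Qed.

Lemma DD_triangle f g h : inPi G D star f -> inPi G D star g -> inPi G D star h ->
  Dle (star (DD G star f g) (DD G star g h)) (DD G star f h).
Proof.
  intros Hf Hg Hh; apply inPi_Represents in Hf as [a Ha]; apply inPi_Represents in Hg as [b Hb];
    apply inPi_Represents in Hh as [c Hh].
  apply (wconv_le (fun n => star (D (a n) (b n)) (D (b n) (c n))) (fun n => D (a n) (c n)));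
    [apply Hc; apply DD_Represents; assumption|apply DD_Represents; assumption|].
  intro; apply (dist_triangle HG).
Qed.

Lemma DD_eq_H0 f g : inPi G D star f -> inPi G D star g -> DD G star f g = H0 -> f = g.
Proof.
  intros Hf Hg HE; apply inPi_Represents in Hf as [a Ha]; apply inPi_Represents in Hg as [b Hb].
  assert (Hab : toH0 (fun n => D (a n) (b n)))
    by (apply toH0_wconv; rewrite <- HE; apply DD_Represents; assumption).
  assert (Hba : toH0 (fun n => D (b n) (a n)))
    by (apply (toH0_ext _ _ Hab); intros; apply (dist_sym HG)).
  apply functional_extensionality; intro x; apply Dle_antisym.
  - apply (wconv_le (fun n => star (D (b n) (a n)) (D (a n) x)) (fun n => D (b n) x));
      [apply wconv_H0star; [exact Hba|apply Ha]|apply Hb|intro; apply (dist_triangle HG)].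
  - apply (wconv_le (fun n => star (D (a n) (b n)) (D (b n) x)) (fun n => D (a n) x));
      [apply wconv_H0star; [exact Hab|apply Hb]|apply Ha|intro; apply (dist_triangle HG)].
Qed.

Lemma PiG_ext (f g : PiG G D star) : proj1_sig f = proj1_sig g -> f = g.
Proof.
  destruct f as [f Hf], g as [g Hg]; simpl; intro E; subst; f_equal; apply proof_irrelevance.
Qed.

Lemma PMS_PiG : PMS (PiG G D star) (DPi G D star) star.
Proof.
  split; [exact HT|split; [|split]].
  - intros [f Hf] [g Hg]; unfold DPi; simpl; split.
    + intro E; apply PiG_ext; simpl; apply DD_eq_H0; assumption.
    + intro E; inversion E; subst; apply DD_refl; assumption.
  - intros [f Hf] [g Hg]; unfold DPi; simpl; apply DD_sym; assumption.
  - intros [f Hf] [g Hg] [h Hh]; unfold DPi; simpl; apply DD_triangle; assumption.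
Qed.

Definition repr_seq (f : PiG G D star) : nat -> G :=
  proj1_sig (constructive_indefinite_description _ (proj2 (proj2_sig f))).

Lemma repr_seq_spec f : Represents (proj1_sig f) (repr_seq f).
Proof. unfold repr_seq; destruct constructive_indefinite_description; assumption. Qed.

Lemma delta_dense (f : PiG G D star) : exists a : nat -> G,
  wconv (fun n => DD G star (delta G D (a n)) (proj1_sig f)) H0.
Proof.
  exists (repr_seq f); apply toH0_wconv.
  apply (toH0_ext (fun n => proj1_sig f (repr_seq f n))); [apply (Represents_diag _ _ (repr_seq_spec f))|].
  intro n; symmetry; apply (DD_delta_l _ _ _ (repr_seq_spec f)).
Qed.

Lemma delta_close (f : PiG G D star) r : 0 < r ->
  exists b, 1 - r < DD G star (delta G D b) (proj1_sig f) r.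
Proof.
  intro Hr; destruct (Represents_diag _ _ (repr_seq_spec f) r Hr r Hr) as [N HN].
  exists (repr_seq f N); rewrite (DD_delta_l _ _ (repr_seq f N) (repr_seq_spec f)); apply HN; lia.
Qed.

Lemma inv_succ_eventually_lt eps : 0 < eps -> exists K, forall k, (k >= K)%nat -> / INR (S k) < eps.
Proof.
  intro He; destruct (archimed_cor1 eps He) as [N [HN HN0]]; exists N; intros k Hk.
  apply Rle_lt_trans with (/ INR N); [|exact HN].
  apply Rinv_le_contravar; [apply lt_0_INR; exact HN0|apply le_INR; lia].
Qed.

(* Approximate the k-th term of a Cauchy sequence of profiles by some delta_(b_k)
   up to 1/(k+1); the b_k are Cauchy and represent the limit. *)
Lemma Complete_PiG : Complete (PiG G D star) (DPi G D star).
Proof.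
  intros z Hz; apply Cauchy_toH0_2 in Hz; set (f := fun k => proj1_sig (z k)).
  destruct (choice (fun k b => 1 - / INR (S k) < DD G star (delta G D b) (f k) (/ INR (S k))))
    as [b Hb]; [intro k; apply delta_close, Rinv_0_lt_compat, lt_0_INR; lia|].
  set (e := fun k => DD G star (delta G D (b k)) (f k)).
  assert (He : toH0 e).
  { intros t Ht eps Heps; destruct (inv_succ_eventually_lt (Rmin t eps)) as [K HK];
      [apply Rmin_glb_lt; assumption|].
    exists K; intros k Hk; specialize (HK k Hk); specialize (Hb k).
    pose proof (Rmin_l t eps); pose proof (Rmin_r t eps).
    pose proof (Dplus_mono (e k) (/ INR (S k)) t ltac:(lra)); unfold e in *; lra. }
  assert (Hin : forall k, inPi G D star (f k)) by (intro k; apply (proj2_sig (z k))).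
  assert (Hdelta : forall k, inPi G D star (delta G D (b k))) by (intro; apply delta_inPi).
  assert (Hbc : Cauchy G D b).
  { apply Cauchy_toH0_2.
    apply (toH0_2_mono (fun m n => star (e m) (star (DD G star (f m) (f n)) (e n)))).
    - apply toH0_2_star; [apply toH0_2_left, He|].
      apply toH0_2_star; [exact Hz|apply (toH0_2_sym (fun n m => e n)), toH0_2_left, He].
    - intros m n; rewrite <- DD_delta.
      eapply Dle_trans; [|apply (DD_triangle _ (f m)); auto].
      apply star_mono; [apply Dle_refl|].
      eapply Dle_trans; [|apply (DD_triangle _ (f n)); auto].
      apply star_mono; [apply Dle_refl|unfold e; rewrite DD_sym; auto; apply Dle_refl]. }
  destruct (Represents_exists b Hbc) as [F HF].
  exists (exist _ F (proj2 (inPi_Represents F) (ex_intro _ b HF))).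
  apply Converges_toH0; unfold DPi; simpl.
  apply (toH0_mono (fun k => star (e k) (F (b k)))); [apply toH0_star; [exact He|]|].
  - apply (Represents_diag F b HF).
  - intro k; fold (f k).
    assert (HFin : inPi G D star F) by (apply inPi_Represents; exists b; exact HF).
    eapply Dle_trans; [|apply (DD_triangle _ (delta G D (b k))); auto].
    rewrite (DD_delta_l F b (b k) HF), (DD_sym (f k)) by auto; apply Dle_refl.
Qed.

(** * The universal property *)

Section Universal.
Context {X : Type} (Lam : X -> X -> Dplus) (phi : G -> X).
Hypothesis HX : PMS X Lam star.
Hypothesis HXc : Complete X Lam.
Hypothesis Hiso : Isometric G X D Lam phi.

Definition completion_map (f : PiG G D star) : X :=
  epsilon (inhabits (phi (repr_seq f 0%nat)))
    (fun x => forall a, Represents (proj1_sig f) a -> Converges X Lam (fun n => phi (a n)) x).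

Lemma completion_map_spec f a :
  Represents (proj1_sig f) a -> Converges X Lam (fun n => phi (a n)) (completion_map f).
Proof.
  revert a; unfold completion_map; apply epsilon_spec.
  pose proof (repr_seq_spec f) as Ha0; set (a0 := repr_seq f) in *.
  destruct (HXc (fun n => phi (a0 n))) as [x Hx].
  { apply Cauchy_toH0_2; apply (toH0_2_ext (fun m n => D (a0 m) (a0 n)));
      [apply Cauchy_toH0_2, Ha0|intros; rewrite Hiso; reflexivity]. }
  exists x; intros a Ha; apply Converges_toH0; apply Converges_toH0 in Hx.
  apply (toH0_mono (fun n => star (Lam (phi (a n)) (phi (a0 n))) (Lam (phi (a0 n)) x)));
    [apply toH0_star; [|exact Hx]|intros; apply (dist_triangle HX)].
  apply (toH0_ext (fun n => D (a n) (a0 n))); [|intros; rewrite Hiso; reflexivity].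
  apply toH0_wconv; rewrite <- (DD_refl (proj1_sig f)) by apply proj2_sig.
  apply DD_Represents; assumption.
Qed.

Lemma completion_map_delta a (Ha : inPi G D star (delta G D a)) :
  completion_map (exist _ (delta G D a) Ha) = phi a.
Proof.
  apply (Converges_unique HX (fun _ => phi a)); [|apply (Converges_const HX)].
  apply (completion_map_spec _ (fun _ => a)), Represents_delta.
Qed.

Lemma completion_map_isometric : Isometric (PiG G D star) X (DPi G D star) Lam completion_map.
Proof.
  intros f g; unfold DPi.
  apply (wconv_unique (fun n => D (repr_seq f n) (repr_seq g n))).
  - apply (wconv_ext (fun n => Lam (phi (repr_seq f n)) (phi (repr_seq g n))));
      [intros; apply Hiso|].
    apply (wconv_dist HX); apply completion_map_spec, repr_seq_spec.
  - apply DD_Represents; apply repr_seq_spec.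
Qed.

Lemma completion_map_bijective : DenseImage G X Lam phi -> Bijective _ _ completion_map.
Proof.
  intro Hden; split.
  - intros f g E; apply (dist_eq_H0 PMS_PiG).
    rewrite <- completion_map_isometric, E; apply (dist_refl HX).
  - intro x; destruct (Hden x) as [c Hcx].
    assert (Hcc : Cauchy G D c).
    { apply Cauchy_toH0_2; apply (toH0_2_ext (fun m n => Lam (phi (c m)) (phi (c n))));
        [apply Cauchy_toH0_2; eapply (Converges_Cauchy HX); eassumption|intros; apply Hiso]. }
    assert (Hrep : Represents (fun y => Lam (phi y) x) c).
    { split; [exact Hcc|intro y].
      apply (wconv_ext (fun n => Lam (phi (c n)) (phi y))); [intros; apply Hiso|].
      rewrite (dist_sym HX); apply (wconv_dist HX); [exact Hcx|apply (Converges_const HX)]. }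
    exists (exist _ _ (proj2 (inPi_Represents _) (ex_intro _ c Hrep))).
    eapply (Converges_unique HX); [apply completion_map_spec; exact Hrep|exact Hcx].
Qed.
End Universal.

(** * The group structure *)

Section Group.
Context {mul : G -> G -> G} (HGg : IPMGroup G mul D star).

Lemma mul_assoc x y z : mul x (mul y z) = mul (mul x y) z.
Proof. apply HGg. Qed.

Definition gunit : G :=
  proj1_sig (constructive_indefinite_description _ (proj2 (proj1 (proj2 HGg)))).

Lemma gunit_spec : (forall x, mul gunit x = x /\ mul x gunit = x) /\
  (forall x, exists y, mul x y = gunit /\ mul y x = gunit).
Proof. unfold gunit; destruct constructive_indefinite_description; assumption. Qed.

Lemma mul1g x : mul gunit x = x.
Proof. apply gunit_spec. Qed.

Lemma mulg1 x : mul x gunit = x.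
Proof. apply gunit_spec. Qed.

Definition ginv (x : G) : G :=
  proj1_sig (constructive_indefinite_description _ (proj2 gunit_spec x)).

Lemma mulgV x : mul x (ginv x) = gunit.
Proof. unfold ginv; destruct constructive_indefinite_description as [y Hy]; apply Hy. Qed.

Lemma mulVg x : mul (ginv x) x = gunit.
Proof. unfold ginv; destruct constructive_indefinite_description as [y Hy]; apply Hy. Qed.

Lemma D_mulr p q r : D (mul p r) (mul q r) = D p q.
Proof. apply HGg. Qed.

Lemma D_mull p q r : D (mul r p) (mul r q) = D p q.
Proof. apply HGg. Qed.

Lemma Cauchy_mul a b : Cauchy G D a -> Cauchy G D b -> Cauchy G D (fun n => mul (a n) (b n)).
Proof.
  rewrite !Cauchy_toH0_2; intros Ha Hb.
  apply (toH0_2_mono (fun m n => star (D (a m) (a n)) (D (b m) (b n))));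
    [apply toH0_2_star; assumption|].
  intros m n; rewrite <- (D_mulr (a m) (a n) (b m)), <- (D_mull (b m) (b n) (a n)).
  apply (dist_triangle HG).
Qed.

Lemma Cauchy_inv a : Cauchy G D a -> Cauchy G D (fun n => ginv (a n)).
Proof.
  rewrite !Cauchy_toH0_2; intro Ha; apply (toH0_2_ext _ _ (toH0_2_sym _ Ha)).
  intros m n; rewrite <- (D_mull (ginv (a m)) (ginv (a n)) (a n)), mulgV.
  rewrite <- (D_mulr (mul (a n) (ginv (a m))) gunit (a m)), <- mul_assoc, mulVg, mulg1, mul1g.
  reflexivity.
Qed.

Lemma odot_ge f g x y z : Lip1 G D star g ->
  Dle (star (f y) (star (D (mul y z) x) (g z))) (odot G mul star f g x).
Proof.
  intro Hg; eapply Dle_trans; [|apply (Dsup_ub _ (star (f y) (g (mul (ginv y) x))))].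
  - apply star_mono; [apply Dle_refl|].
    eapply Dle_trans; [|apply (Hg (mul (ginv y) x) z)].
    rewrite <- (D_mull (mul (ginv y) x) z y), mul_assoc, mulgV, mul1g, (dist_sym HG x).
    apply Dle_refl.
  - exists y, (mul (ginv y) x); split; [rewrite mul_assoc, mulgV, mul1g|]; reflexivity.
Qed.

Lemma Represents_odot f g a b : Represents f a -> Represents g b ->
  Represents (odot G mul star f g) (fun n => mul (a n) (b n)).
Proof.
  intros Hfa Hgb; pose proof Hfa as [Ha Hf]; pose proof Hgb as [Hb Hg].
  split; [apply Cauchy_mul; assumption|intro x].
  destruct (wconv_dist_Cauchy HG (fun n => mul (a n) (b n)) (fun _ => x)) as [U HU];
    [apply Cauchy_mul; assumption|apply Cauchy_const|].
  replace (odot G mul star f g x) with U; [exact HU|apply Dle_antisym].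
  - apply (wconv_le (fun n => star (f (a n)) (star (D (mul (a n) (b n)) x) (g (b n))))
                    (fun _ => odot G mul star f g x)); [|apply wconv_const|].
    + apply wconv_H0star; [eapply Represents_diag; eassumption|].
      apply wconv_starH0; [eapply Represents_diag; eassumption|exact HU].
    + intro n; apply odot_ge, (Represents_Lip1 g b Hgb).
  - apply Dsup_least; intros F [y [z [Hyz ->]]].
    apply (wconv_le (fun n => star (D (a n) y) (D (b n) z)) (fun n => D (mul (a n) (b n)) x));
      [apply Hc; [apply Hf|apply Hg]|exact HU|].
    intro n; rewrite <- (D_mulr (a n) y (b n)), <- (D_mull (b n) z y), <- Hyz.
    apply (dist_triangle HG).
Qed.

Lemma odot_inPi f g : inPi G D star f -> inPi G D star g -> inPi G D star (odot G mul star f g).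
Proof.
  rewrite !inPi_Represents; intros [a Ha] [b Hb].
  exists (fun n => mul (a n) (b n)); apply Represents_odot; assumption.
Qed.

Definition odotPi (f g : PiG G D star) : PiG G D star :=
  exist _ (odot G mul star (proj1_sig f) (proj1_sig g)) (odot_inPi _ _ (proj2_sig f) (proj2_sig g)).

Lemma delta_odot a b : delta G D (mul a b) = odot G mul star (delta G D a) (delta G D b).
Proof.
  apply (Represents_unique _ _ (fun _ => mul a b)); [apply Represents_delta|].
  apply (Represents_odot _ _ (fun _ => a) (fun _ => b)); apply Represents_delta.
Qed.

Lemma odotPi_assoc f g h : odotPi f (odotPi g h) = odotPi (odotPi f g) h.
Proof.
  pose proof (repr_seq_spec f) as Ha; pose proof (repr_seq_spec g) as Hb;
    pose proof (repr_seq_spec h) as Hh.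
  apply PiG_ext, (Represents_unique _ _
    (fun n => mul (repr_seq f n) (mul (repr_seq g n) (repr_seq h n)))).
  - apply Represents_odot; [exact Ha|apply Represents_odot; assumption].
  - apply (Represents_ext _ (fun n => mul (mul (repr_seq f n) (repr_seq g n)) (repr_seq h n)));
      [intro; symmetry; apply mul_assoc|].
    apply Represents_odot; [apply Represents_odot|]; assumption.
Qed.

Definition unitPi : PiG G D star := exist _ (delta G D gunit) (delta_inPi gunit).

Lemma odotPi_unit f : odotPi unitPi f = f /\ odotPi f unitPi = f.
Proof.
  pose proof (repr_seq_spec f) as Ha; split; apply PiG_ext, (Represents_unique _ _ (repr_seq f));
    try exact Ha.
  - apply (Represents_ext _ (fun n => mul gunit (repr_seq f n))); [intro; apply mul1g|].
    apply (Represents_odot _ _ (fun _ => gunit)); [apply Represents_delta|exact Ha].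
  - apply (Represents_ext _ (fun n => mul (repr_seq f n) gunit)); [intro; apply mulg1|].
    apply (Represents_odot _ _ _ (fun _ => gunit)); [exact Ha|apply Represents_delta].
Qed.

Lemma odotPi_inv f : exists g, odotPi f g = unitPi /\ odotPi g f = unitPi.
Proof.
  pose proof (repr_seq_spec f) as Ha; set (a := repr_seq f) in *.
  destruct (Represents_exists _ (Cauchy_inv a (proj1 Ha))) as [gi Hgi].
  exists (exist _ gi (proj2 (inPi_Represents gi) (ex_intro _ _ Hgi)));
    split; apply PiG_ext, (Represents_unique _ _ (fun _ => gunit)); try apply Represents_delta.
  - apply (Represents_ext _ (fun n => mul (a n) (ginv (a n)))); [intro; apply mulgV|].
    apply Represents_odot; assumption.
  - apply (Represents_ext _ (fun n => mul (ginv (a n)) (a n))); [intro; apply mulVg|].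
    apply Represents_odot; assumption.
Qed.

Lemma DPi_invariant : Invariant (PiG G D star) odotPi (DPi G D star).
Proof.
  intros f g h; unfold DPi; simpl.
  pose proof (repr_seq_spec f) as Ha; pose proof (repr_seq_spec g) as Hb;
    pose proof (repr_seq_spec h) as Hh.
  set (a := repr_seq f) in *; set (b := repr_seq g) in *; set (c := repr_seq h) in *.
  split.
  - apply (DD_Represents_eq _ _ (fun n => mul (a n) (c n)) (fun n => mul (b n) (c n)));
      try (apply Represents_odot; assumption).
    apply (wconv_ext (fun n => D (a n) (b n))); [intro; symmetry; apply D_mulr|].
    apply DD_Represents; assumption.
  - apply (DD_Represents_eq _ _ (fun n => mul (c n) (a n)) (fun n => mul (c n) (b n)));
      try (apply Represents_odot; assumption).
    apply (wconv_ext (fun n => D (a n) (b n))); [intro; symmetry; apply D_mull|].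
    apply DD_Represents; assumption.
Qed.

Lemma IPMGroup_PiG : IPMGroup (PiG G D star) odotPi (DPi G D star) star.
Proof.
  split; [exact PMS_PiG|split; [split|exact DPi_invariant]].
  - exact odotPi_assoc.
  - exists unitPi; split; [exact odotPi_unit|exact odotPi_inv].
Qed.

Lemma completion_map_morph {X : Type} (mulX : X -> X -> X) (Lam : X -> X -> Dplus)
  (phi : G -> X) :
  IPMGroup X mulX Lam star -> Complete X Lam -> Isometric G X D Lam phi ->
  (forall a b, phi (mul a b) = mulX (phi a) (phi b)) ->
  forall f g, completion_map Lam phi (odotPi f g) =
              mulX (completion_map Lam phi f) (completion_map Lam phi g).
Proof.
  intros [HX [_ HXinv]] HXc Hiso Hhom f g.
  pose proof (repr_seq_spec f) as Ha; pose proof (repr_seq_spec g) as Hb.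
  set (a := repr_seq f) in *; set (b := repr_seq g) in *.
  apply (Converges_unique HX (fun n => phi (mul (a n) (b n)))).
  - apply (completion_map_spec _ _ HX HXc Hiso); simpl; apply Represents_odot; assumption.
  - pose proof (completion_map_spec _ _ HX HXc Hiso f a Ha) as Cf.
    pose proof (completion_map_spec _ _ HX HXc Hiso g b Hb) as Cg.
    apply Converges_toH0 in Cf; apply Converges_toH0 in Cg; apply Converges_toH0.
    set (x := completion_map Lam phi f) in *; set (y := completion_map Lam phi g) in *.
    apply (toH0_mono (fun n => star (Lam (phi (a n)) x) (Lam (phi (b n)) y)));
      [apply toH0_star; assumption|].
    intro n; rewrite Hhom, <- (proj1 (HXinv (phi (a n)) x (phi (b n)))),
      <- (proj2 (HXinv (phi (b n)) y x)).
    apply (dist_triangle HX).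
Qed.
End Group.
End Completion.
End TriangleFunction.

Theorem mainTheorem13 (G : Type) (D : G -> G -> Dplus)
  (star : Dplus -> Dplus -> Dplus)
  (Hcont : ContTF star) (HG : PMS G D star) :
  ( PMS (PiG G D star) (DPi G D star) star /\
    Complete (PiG G D star) (DPi G D star) /\
    (forall a, inPi G D star (delta G D a)) /\
    (forall a b, DD G star (delta G D a) (delta G D b) = D a b) /\
    (forall f : PiG G D star, exists a : nat -> G,
        wconv (fun n => DD G star (delta G D (a n)) (proj1_sig f)) H0) /\
    (forall (X : Type) (Lam : X -> X -> Dplus) (phi : G -> X),
        PMS X Lam star -> Complete X Lam ->
        Isometric G X D Lam phi -> DenseImage G X Lam phi ->
        exists T : PiG G D star -> X,
          Bijective _ _ T /\ Isometric _ X (DPi G D star) Lam T /\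
          (forall a (Ha : inPi G D star (delta G D a)),
              T (exist _ (delta G D a) Ha) = phi a)) ) /\
  (forall mul : G -> G -> G, IPMGroup G mul D star ->
     (forall f g, inPi G D star f -> inPi G D star g ->
        inPi G D star (odot G mul star f g)) /\
     (exists odotPi : PiG G D star -> PiG G D star -> PiG G D star,
        (forall f g, proj1_sig (odotPi f g) = odot G mul star (proj1_sig f) (proj1_sig g)) /\
        IPMGroup (PiG G D star) odotPi (DPi G D star) star /\
        (forall a b, delta G D (mul a b) = odot G mul star (delta G D a) (delta G D b)) /\
        (forall a b, delta G D a = delta G D b -> a = b) /\
        (forall (X : Type) (mulX : X -> X -> X) (Lam : X -> X -> Dplus) (phi : G -> X),
           IPMGroup X mulX Lam star -> Complete X Lam ->
           Isometric G X D Lam phi -> DenseImage G X Lam phi ->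
           (forall a b, phi (mul a b) = mulX (phi a) (phi b)) ->
           exists T : PiG G D star -> X,
             Bijective _ _ T /\ Isometric _ X (DPi G D star) Lam T /\
             (forall a (Ha : inPi G D star (delta G D a)),
                 T (exist _ (delta G D a) Ha) = phi a) /\
             (forall f g, T (odotPi f g) = mulX (T f) (T g))))).
Proof.
  pose proof (proj1 HG) as HT.
  split; [split; [|split; [|split; [|split; [|split]]]]|intros mul HGg; split].
  - exact (PMS_PiG HT Hcont HG).
  - exact (Complete_PiG HT Hcont HG).
  - exact (delta_inPi HT Hcont HG).
  - exact (DD_delta HT Hcont HG).
  - exact (delta_dense HT Hcont HG).
  - intros X Lam phi HX HXc Hiso Hden; exists (completion_map Lam phi); split; [|split].
    + exact (completion_map_bijective HT Hcont HG Lam phi HX HXc Hiso Hden).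
    + exact (completion_map_isometric HT Hcont HG Lam phi HX HXc Hiso).
    + exact (completion_map_delta HT Hcont HG Lam phi HX HXc Hiso).
  - exact (odot_inPi HT Hcont HG HGg).
  - exists (odotPi HT Hcont HG HGg); split; [reflexivity|split; [|split; [|split]]].
    + exact (IPMGroup_PiG HT Hcont HG HGg).
    + exact (delta_odot HT Hcont HG HGg).
    + exact (delta_inj HG).
    + intros X mulX Lam phi HXg HXc Hiso Hden Hhom.
      exists (completion_map Lam phi); split; [|split; [|split]].
      * exact (completion_map_bijective HT Hcont HG Lam phi (proj1 HXg) HXc Hiso Hden).
      * exact (completion_map_isometric HT Hcont HG Lam phi (proj1 HXg) HXc Hiso).
      * exact (completion_map_delta HT Hcont HG Lam phi (proj1 HXg) HXc Hiso).
      * exact (completion_map_morph HT Hcont HG HGg mulX Lam phi HXg HXc Hiso Hhom).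
Qed.
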